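(* Let $\Sigma$ be a complete fan in $N_{\mathbb R}\cong\mathbb R^2$ and $\mathbb L$ a combinatorially indecomposable tropical Lagrangian multi-section of rank $r$ over $\Sigma$. If $\mathbb L$ is unobstructed, with local system $\mathcal L$ on $L\setminus S'$ and consistent collection $\Theta$, then $\mathcal L$ is (up to isomorphism) the unique $\mathbb C^\times$-local system on $L\setminus S'$ whose monodromy around the unique ramification point of $\pi:L\to N_{\mathbb R}$ is $(-1)^{r+1}$.
   Context: $N$ lattice of rank $2$, $M=\mathrm{Hom}(N,\mathbb Z)$, $\Sigma(k)$ the $k$-dimensional cones, $\sigma^\vee$ dual cones, $U(\sigma)=\mathrm{Spec}\,\mathbb C[\sigma^\vee\cap M]$, $z^m$ monomials. $\mathbb L=(L,\Sigma_L,\mu,\pi,\varphi)$: a cone complex $L$ (finite union of closed rational polyhedral cones glued along faces), weights $\mu$, a branched covering $\pi$ onto $(N_{\mathbb R},\Sigma)$ mapping cones homeomorphically onto cones with weighted fibre count $r$, and $\varphi$ continuous, integral linear on cones; $m(\sigma')\in M$ its slope on a maximal cone; $\sigma^{(1)},\dots,\sigma^{(r)}$ the lifts of $\sigma\in\Sigma(2)$ with multiplicity. Combinatorial indecomposability (not combinatorially equivalent to a combinatorial union of two connected ones) gives: $L$ connected, separable (distinct lifts of a ray carry distinct restrictions of $\varphi$), and ramification locus $S'=L^{(0)}=\pi^{-1}(0)$ a single point. For adjacent $\sigma_1,\sigma_2\in\Sigma(2)$ (sharing a ray), each lift $\sigma_1^{(\alpha)}$ determines a unique lift $\sigma_2^{(\beta)}$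 sharing a ray with it. A $\mathbb C^\times$-local system $\mathcal L$ on $L\setminus S'$ is represented by constants $g^{sf}_{\sigma_1^{(\alpha)}\sigma_2^{(\beta)}}\in\mathbb C^\times$ on adjacent pairs of lifts. $\mathcal E_\sigma$: trivial rank $r$ bundle on $U(\sigma)$ with frame $1(\sigma^{(\alpha)})$ of torus weight $m(\sigma^{(\alpha)})$. $G^{sf}_{\sigma_1\sigma_2}:1(\sigma_1^{(\alpha)})\mapsto g^{sf}_{\sigma_1^{(\alpha)}\sigma_2^{(\beta)}}z^{m(\sigma_1^{(\alpha)})-m(\sigma_2^{(\beta)})}1(\sigma_2^{(\beta)})$. For $\tau=\sigma_1\cap\sigma_2\in\Sigma(1)$ and a cone $\omega'$ of $L$, $N_\tau(\omega')$ is the endomorphism of $\mathcal E_{\sigma_1}|_{U(\tau)}$ with $(\alpha,\beta)$-entry $n^{(\alpha\beta)}_\tau(\omega')z^{m(\sigma_1^{(\alpha)})-m(\sigma_1^{(\beta)})}$ ($n$'s complex constants) if $\omega'\subset\sigma_1^{(\alpha)}\cap\sigma_1^{(\beta)}$, $\alpha\ne\beta$, $m(\sigma_1^{(\alpha)})-m(\sigma_1^{(\beta)})\in\tau^\vee\cap M$, and $0$ otherwise; $\Theta_{\sigma_1\sigma_2}=\prod_{\omega'\in S'_\tau}\exp N_\tau(\omega')$ with $S'_\tau=\{\sigma_1^{(\alpha)}\cap\sigma_1^{(\beta)}:m(\sigma_1^{(\alpha)})-m(\sigma_1^{(\beta)})\in\tau^\vee\cap M\}$; $G_{\sigma_1\sigma_2}=G^{sf}_{\sigma_1\sigma_2}\circ\Theta_{\sigma_1\sigma_2}$.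 $\Theta$ is consistent if for every $\omega\in\Sigma$ and every cycle $\sigma_1,\dots,\sigma_{l+1}=\sigma_1$ of maximal cones containing $\omega$ with consecutive ones sharing a ray, $G_{\sigma_l\sigma_{l+1}}|_{U(\omega)}\circ\cdots\circ G_{\sigma_1\sigma_2}|_{U(\omega)}=\mathrm{Id}$. $\mathbb L$ is unobstructed if there exist $\mathcal L$ and a consistent $\Theta$. *)

From HB Require Import structures.
From mathcomp Require Import all_boot all_order all_algebra all_fingroup.
From mathcomp Require Import all_classical all_reals all_analysis.
From mathcomp Require Import complex.
Set Implicit Arguments. Unset Strict Implicit. Unset Printing Implicit Defensive.
Import Order.TTheory GRing.Theory Num.Theory ComplexField.
Import numFieldTopology.Exports numFieldNormedType.Exports.
Local Open Scope classical_set_scope.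
Local Open Scope ring_scope.

HB.instance Definition _ (R : rcfType) :=
  PseudoPointedMetric.copy R[i] (R[i] : numClosedFieldType)^o.

Definition Z2 := (int * int)%type.
Definition dotZ (u w : Z2) : int := u.1 * w.1 + u.2 * w.2.
Definition detZ (u w : Z2) : int := u.1 * w.2 - u.2 * w.1.
Definition subZ (u w : Z2) : Z2 := (u.1 - w.1, u.2 - w.2).

(* A complete fan is encoded by its rays v_0, ..., v_{n-1} in              *)
(* counterclockwise order; the maximal cones are                           *)
(* sigma_i = cone(v_i, v_{i+1})  (indices mod n, successor = ordS).        *)
(* Conditions: each sigma_i is strictly convex and 2-dimensional          *)
(* (det(v_i,v_{i+1}) > 0), and the half-open cones [v_i, v_{i+1}) cover   *)
(* every nonzero lattice point exactly once (i.e. the cones form a fan    *)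
(* whose support is all of N_R).                                          *)
Definition in_halfopen_cone n (v : 'I_n -> Z2) (i : 'I_n) (x : Z2) : bool :=
  (0 < detZ x (v (ordS i))) && (0 <= detZ (v i) x).

Definition complete_fan n (v : 'I_n -> Z2) : Prop :=
  (forall i : 'I_n, 0 < detZ (v i) (v (ordS i))) /\
  (forall x : Z2, x != (0, 0) -> #|[set i | in_halfopen_cone v i x]| = 1%N).

(* Tropical Lagrangian multi-sections of rank r over such a fan, in the  *)
(* combinatorially indecomposable situation (weights 1, ramification     *)
(* locus S' = L^(0) = pi^{-1}(0) a single point).           *)
(*  - lifts of sigma_i : sigma_i^(a), a : 'I_r                            *)
(*  - p i : the bijection sigma_i^(a) shares a ray (a lift of v_{i+1})     *)
(*          with sigma_{i+1}^(p i a)                                      *)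
(*  - m i a : the slope m(sigma_i^(a)) in M of phi on sigma_i^(a)         *)
Definition step n r (p : 'I_n -> {perm 'I_r}) (s : 'I_n * 'I_r) : 'I_n * 'I_r :=
  (ordS s.1, p s.1 s.2).

(* phi is continuous: slopes agree on the common ray lift *)
Definition phi_continuous n r (v : 'I_n -> Z2) (p : 'I_n -> {perm 'I_r})
  (m : 'I_n -> 'I_r -> Z2) : Prop :=
  forall i a, dotZ (m i a) (v (ordS i)) = dotZ (m (ordS i) (p i a)) (v (ordS i)).

(* separability: distinct lifts of the ray v_{i+1} (indexed by the lift    *)
(* of sigma_i they bound) carry distinct restrictions of phi               *)
Definition separable n r (v : 'I_n -> Z2) (m : 'I_n -> 'I_r -> Z2) : Prop :=
  forall i : 'I_n, injective (fun a => dotZ (m i a) (v (ordS i))).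

(* L \ S' is connected: the lifts of maximal cones glued along ray lifts   *)
(* form a single chain                                                      *)
Definition punctured_connected n r (p : 'I_n -> {perm 'I_r}) : Prop :=
  forall s s' : 'I_n * 'I_r, exists k, iter k (step p) s = s'.

(* Faces of the cone complex L: the apex (= S'), the ray lifts and the    *)
(* lifts of maximal cones.                                                  *)
(*   None               : the apex                                        *)
(*   Some (false,(i,a)) : the lift of v_{i+1} which is the common ray of  *)
(*                        sigma_i^(a) and sigma_{i+1}^(p i a)             *)
(*   Some (true,(i,a))  : sigma_i^(a)                                     *)
Definition Lface n r := option (bool * ('I_n * 'I_r)).

Definition face_of n r (p : 'I_n -> {perm 'I_r}) (f : Lface n r) (i : 'I_n) (a : 'I_r) : bool :=
  match f with
  | None => true
  | Some (false, (j, b)) => ((j == i) && (b == a)) || ((ordS j == i) && (p j b == a))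
  | Some (true, (j, b)) => (j == i) && (b == a)
  end.

Definition face_le n r (p : 'I_n -> {perm 'I_r}) (f f' : Lface n r) : bool :=
  match f' with
  | None => f == None
  | Some (false, _) => (f == None) || (f == f')
  | Some (true, (i, a)) => face_of p f i a
  end.

Definition is_meet n r (p : 'I_n -> {perm 'I_r}) (f : Lface n r) (i : 'I_n) (a b : 'I_r) : bool :=
  [&& face_of p f i a, face_of p f i b &
      [forall f' : Lface n r, (face_of p f' i a && face_of p f' i b) ==> face_le p f' f]].

(*   Sface: None = {0}, Some (false, j) = ray v_j, Some (true, i) = sigma_i *)
(*   a move (i, true)  is the ordered pair (sigma_i, sigma_{i+1})          *)
(*   a move (i, false) is the ordered pair (sigma_{i+1}, sigma_i)          *)
(*   in both cases tau = sigma_i \cap sigma_{i+1} = ray v_{i+1}.           *)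
Definition Sface n := option (bool * 'I_n).

Definition cone_contains n (i : 'I_n) (w : Sface n) : bool :=
  match w with
  | None => true
  | Some (false, j) => (j == i) || (j == ordS i)
  | Some (true, j) => j == i
  end.

Definition move n := ('I_n * bool)%type.
Definition msrc n (mv : move n) : 'I_n := if mv.2 then mv.1 else ordS mv.1.
Definition mtgt n (mv : move n) : 'I_n := if mv.2 then ordS mv.1 else mv.1.
Definition mtau n (mv : move n) : 'I_n := ordS mv.1.
Definition chains n (mv mv' : move n) : bool := mtgt mv == msrc mv'.

Section Sheaves.
Variable R : realType.
Local Notation C := R[i].

Definition zmon (t : C * C) (u : Z2) : C := t.1 ^ u.1 * t.2 ^ u.2.

Definition expm r (A : 'M[C]_r) : 'M[C]_r :=
  \matrix_(a, b) lim ((fun N : nat => (\sum_(k < N) (k`!%:R)^-1 *: A ^+ k) a b) @ \oo).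

Variables (n r : nat) (v : 'I_n -> Z2) (p : 'I_n -> {perm 'I_r})
  (m : 'I_n -> 'I_r -> Z2).

(* A C^x-local system on L \ S': constants g i a attached to the adjacent *)
(* pair (sigma_i^(a), sigma_{i+1}^(p i a)); the constant of the reversed   *)
(* pair is the inverse.                                                    *)
Definition local_system (g : 'I_n -> 'I_r -> C) : Prop := forall i a, g i a != 0.

(* Matrices below use the row-vector convention: row a of the matrix of a *)
(* morphism E_{sigma} -> E_{sigma'} is the image of the frame 1(sigma^(a)),*)
(* and composition first-A-then-B is   A *m B.  All sections are           *)
(* evaluated at points t of the dense torus (C^x)^2 \subset U(omega).     *)

Definition Gsf (g : 'I_n -> 'I_r -> C) (mv : move n) (t : C * C) : 'M[C]_r :=
  \matrix_(a, b)
    if mv.2 then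
      (if b == p mv.1 a then g mv.1 a * zmon t (subZ (m mv.1 a) (m (ordS mv.1) b)) else 0)
    else
      (if a == p mv.1 b then (g mv.1 b)^-1 * zmon t (subZ (m (ordS mv.1) a) (m mv.1 b))
       else 0).

Definition Nmat (nc : move n -> Lface n r -> 'I_r -> 'I_r -> C) (mv : move n)
  (f : Lface n r) (t : C * C) : 'M[C]_r :=
  \matrix_(a, b)
    if [&& a != b, face_of p f (msrc mv) a, face_of p f (msrc mv) b &
          0 <= dotZ (subZ (m (msrc mv) a) (m (msrc mv) b)) (v (mtau mv))]
    then nc mv f a b * zmon t (subZ (m (msrc mv) a) (m (msrc mv) b))
    else 0.

Definition Sprime_tau (mv : move n) : {set Lface n r} :=
  [set f | [exists a, exists b,
     is_meet p f (msrc mv) a b &&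
     (0 <= dotZ (subZ (m (msrc mv) a) (m (msrc mv) b)) (v (mtau mv)))]].

Definition Theta nc (mv : move n) (t : C * C) : 'M[C]_r :=
  \big[mulmx/1%:M]_(f in Sprime_tau mv) expm (Nmat nc mv f t).

Definition Gmat g nc (mv : move n) (t : C * C) : 'M[C]_r :=
  Theta nc mv t *m Gsf g mv t.

Definition consistent g nc : Prop :=
  forall (w : Sface n) (c : seq (move n)),
    path.cycle (@chains n) c ->
    all (fun mv => cone_contains (msrc mv) w && cone_contains (mtgt mv) w) c ->
    forall t : C * C, t.1 != 0 -> t.2 != 0 ->
      \big[mulmx/1%:M]_(mv <- c) Gmat g nc mv t = 1%:M.

(* monodromy of the local system along the loop in L \ S' around the      *)
(* ramification point, starting from the lift s                           *)
Definition monodromy (g : 'I_n -> 'I_r -> C) (s : 'I_n * 'I_r) : C :=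
  \prod_(k < n * r) g (iter k (step p) s).1 (iter k (step p) s).2.

Definition iso_ls (g g' : 'I_n -> 'I_r -> C) : Prop :=
  exists h : 'I_n -> 'I_r -> C, (forall i a, h i a != 0) /\
    forall i a, g' i a = h (ordS i) (p i a) * g i a / h i a.

End Sheaves.

From HB Require Import structures.
From mathcomp Require Import all_boot all_order all_algebra all_fingroup.
From mathcomp Require Import all_classical all_reals all_analysis.
From mathcomp Require Import complex.
Set Implicit Arguments.
Unset Strict Implicit.
Unset Printing Implicit Defensive.
Import Order.TTheory GRing.Theory Num.Theory ComplexField.
Import numFieldTopology.Exports numFieldNormedType.Exports.
Local Open Scope ring_scope.

(* Evaluate the consistency condition for the cone {0} at the point (1,1) of
   the torus, along the loop of all maximal cones, and take determinants.
   Each factor of Theta is the exponential of a matrix that is strictly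
   triangular for the order of the lifts given by their (pairwise distinct)
   slopes along tau, so det Theta = 1, while G^sf at (1,1) is a diagonal
   matrix of constants g times the permutation matrix of the gluing p_i.
   Hence the product of all constants g, i.e. the monodromy around S', is
   the sign of the permutation of the lifts obtained by going once around
   the loop.  Connectedness of L \ S' makes that permutation an r-cycle, of
   sign (-1)^(r+1).  Finally, on the single chain of lifts of maximal
   cones, the ratio g'/g of two local systems with the same monodromy is a
   coboundary: the gauge is its running product along the chain. *)

Section KeyRank.
Variables (d : Order.disp_t) (T : finType) (D : porderType d) (key : T -> D).

Definition key_rank (x : T) : nat := #|[pred y | (key y < key x)%O]|.

Lemma key_rank_lt_card x : (key_rank x < #|T|)%N.
Proof.
apply: proper_card; apply/properP; split; first exact: subset_predT.
by exists x; rewrite // inE /= ltxx.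
Qed.

Lemma key_rank_lt x y : (key y < key x)%O -> (key_rank y < key_rank x)%N.
Proof.
move=> lt_yx; apply: proper_card; apply/properP; split.
  by apply/fintype.subsetP => z; rewrite !inE => /lt_trans; apply.
by exists y; rewrite !inE ?ltxx.
Qed.

End KeyRank.

Section DescendingMatrices.
Variables (K : pzRingType) (r : nat) (rk : 'I_r -> nat).

Definition descending (A : 'M[K]_r) : Prop :=
  forall a b, A a b != 0 -> (rk b < rk a)%N.

Lemma descending0 : descending 0.
Proof. by move=> a b; rewrite mxE eqxx. Qed.

Lemma descendingD A B : descending A -> descending B -> descending (A + B).
Proof.
move=> dA dB a b; rewrite mxE.
by have [/eqP ->|/dA //] := boolP (A a b == 0); rewrite add0r => /dB.
Qed.

Lemma descendingZ c A : descending A -> descending (c *: A).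
Proof.
move=> dA a b; rewrite mxE.
by have [/eqP ->|/dA //] := boolP (A a b == 0); rewrite mulr0 eqxx.
Qed.

Lemma descending_expr_entry A k a b :
  descending A -> (A ^+ k) a b != 0 -> (rk b + k <= rk a)%N.
Proof.
move=> dA; elim: k => [|k IHk] in b *.
  rewrite expr0 mxE addn0; have [->|neq_ab] := eqVneq a b; first by [].
  by rewrite mulr0n eqxx.
rewrite exprSr -mulmxE mxE => /eqP nz_ab.
have [j nz] : exists j, (A ^+ k) a j * A j b != 0.
  apply/existsP; apply: contra_notT nz_ab => /existsPn zero.
  by apply: big1 => j _; apply/eqP/negPn; exact: zero.
have /IHk le_ja : (A ^+ k) a j != 0 by apply: contraNneq nz => ->; rewrite mul0r.
have /dA lt_bj : A j b != 0 by apply: contraNneq nz => ->; rewrite mulr0.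
by rewrite addnS; apply: leq_trans le_ja; rewrite ltn_add2r.
Qed.

Lemma descending_exprS A k : descending A -> descending (A ^+ k.+1).
Proof.
move=> dA a b /(descending_expr_entry dA); rewrite addnS.
by apply: leq_trans; rewrite ltnS leq_addr.
Qed.

Lemma descending_nilpotent A k :
  (forall a, rk a < r)%N -> descending A -> (r <= k)%N -> A ^+ k = 0.
Proof.
move=> rk_lt dA le_rk; apply/matrixP => a b; rewrite mxE.
apply/eqP; apply: contraT => /(descending_expr_entry dA) le_k.
have := leq_trans (leq_addl _ _) le_k.
by rewrite leqNgt (leq_trans (rk_lt a) le_rk).
Qed.

End DescendingMatrices.

Lemma perm_rank_fixed (T : finType) (s : {perm T}) (rk : T -> nat) :
  (forall x, rk (s x) <= rk x)%N -> forall x, rk (s x) = rk x.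
Proof.
move=> le_s x; have := @leqif_sum T predT (fun y => rk (s y) == rk y) _ _
  (fun y _ => leqif_eq (le_s y)).
case=> _ /esym; rewrite [X in _ == X](reindex_inj (@perm_inj _ s)).
by rewrite eqxx => /forall_inP/(_ x isT)/eqP.
Qed.

Lemma det_add1_descending (K : comPzRingType) r (rk : 'I_r -> nat) (A : 'M[K]_r) :
  descending rk A -> \det (1%:M + A) = 1.
Proof.
move=> dA; have A_diag a : A a a = 0 by apply/eqP/contraT => /dA; rewrite ltnn.
have entry a b : (1%:M + A) a b = (a == b)%:R + A a b by rewrite !mxE.
rewrite /determinant (bigD1 1%g) //= [X in _ + X]big1 ?addr0 => [|s s_neq1].
  rewrite odd_perm1 expr0 mul1r; apply: big1 => a _.
  by rewrite perm1 entry eqxx A_diag addr0.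
have [a /eqP zero_a | nz] := pickP (fun a => (1%:M + A) a (s a) == 0).
  by rewrite (bigD1 a) //= zero_a mul0r mulr0.
have le_s a : (rk (s a) <= rk a)%N.
  have [<-|/negPf neq] := eqVneq a (s a); first exact: leqnn.
  by apply/ltnW/dA; move: (nz a); rewrite entry neq add0r => /negbT.
case/eqP: s_neq1; apply/permP => a; rewrite perm1.
apply/eqP/contraT => neq; have := perm_rank_fixed le_s a.
have /dA : A a (s a) != 0.
  by move: (nz a); rewrite entry [a == _]eq_sym (negPf neq) add0r => /negbT.
by move=> /[swap] ->; rewrite ltnn.
Qed.

Section MatrixExponential.
Variables (R : realType) (r : nat).

Lemma expm_nilpotent (A : 'M[R[i]]_r) d :
  (forall k, (d <= k)%N -> A ^+ k = 0) ->
  expm A = \sum_(k < d) k`!%:R^-1 *: A ^+ k.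
Proof.
move=> A_nil; apply/matrixP => a b; rewrite mxE.
apply: (lim_near_cst (@norm_hausdorff _ (R[i] : numClosedFieldType)^o)).
exists d => // N /= le_dN.
suff -> : \sum_(k < N) k`!%:R^-1 *: A ^+ k = \sum_(k < d) k`!%:R^-1 *: A ^+ k by [].
rewrite (big_ord_widen N (fun k => k`!%:R^-1 *: A ^+ k) le_dN) [RHS]big_mkcond.
apply: eq_bigr => k _ /=.
by case: ltnP => // /A_nil ->; rewrite scaler0.
Qed.

Lemma det_expm_descending (rk : 'I_r -> nat) (A : 'M[R[i]]_r) :
  (forall a, rk a < r)%N -> descending rk A -> \det (expm A) = 1.
Proof.
move=> rk_lt dA; rewrite (@expm_nilpotent _ r.+1) => [|k /ltnW]; last first.
  exact: descending_nilpotent.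
rewrite big_ord_recl fact0 invr1 scale1r expr0; apply: (det_add1_descending (rk := rk)).
apply: (big_ind (descending rk)) => [|B C|k _]; first exact: descending0.
  exact: descendingD.
exact/descendingZ/descending_exprS.
Qed.

End MatrixExponential.

Section ConnectedOrbit.
Variables (T : finType) (f : T -> T) (x : T).
Hypothesis f_conn : forall y, fconnect f x y.

Lemma order_connected : fingraph.order f x = #|T|.
Proof. by apply: eq_card => y; rewrite !inE f_conn. Qed.

Lemma perm_orbit_connected : perm_eq (fingraph.orbit f x) (enum T).
Proof.
apply: uniq_perm; [exact: orbit_uniq | exact: enum_uniq | move=> y].
by rewrite mem_enum -fconnect_orbit f_conn.
Qed.

Lemma big_traject (U : Type) (idx : U) (op : Monoid.com_law idx) (F : T -> U) k :
  \big[op/idx]_(y <- traject f x k) F y = \big[op/idx]_(j < k) F (iter j f x).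
Proof.
elim: k => [|k IHk]; first by rewrite big_nil big_ord0.
by rewrite trajectSr -cats1 big_cat big_ord_recr IHk big_seq1.
Qed.

Lemma big_orbit_connected (U : Type) (idx : U) (op : Monoid.com_law idx) (F : T -> U) :
  \big[op/idx]_(y <- fingraph.orbit f x) F y = \big[op/idx]_y F y.
Proof. by rewrite (perm_big _ perm_orbit_connected) big_enum. Qed.

Lemma big_iter_connected (U : Type) (idx : U) (op : Monoid.com_law idx) (F : T -> U) :
  \big[op/idx]_(k < #|T|) F (iter k f x) = \big[op/idx]_y F y.
Proof. by rewrite -big_orbit_connected /fingraph.orbit big_traject order_connected. Qed.

Hypothesis f_inj : injective f.

Lemma coboundary_of_prod_eq1 (K : fieldType) (u : T -> K) :
  (forall y, u y != 0) -> \prod_y u y = 1 ->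
  exists2 h : T -> K, (forall y, h y != 0) & forall y, h (f y) = h y * u y.
Proof.
move=> u_nz prod_u.
pose h y := \prod_(j < findex f x y) u (iter j f x).
exists h => [y|y]; first by apply/prodf_neq0 => j _.
have iter_y := iter_findex (f_conn y).
have hS : h y * u y = \prod_(j < (findex f x y).+1) u (iter j f x).
  by rewrite big_ord_recr /= iter_y.
have := findex_max (f_conn y); rewrite order_connected leq_eqVlt.
case/orP=> [/eqP y_last | y_not_last].
  have fy : f y = x.
    by rewrite -[RHS](iter_order f_inj) order_connected -y_last /= iter_y.
  by rewrite hS y_last big_iter_connected prod_u fy /h findex0 big_ord0.
have fy : f y = iter (findex f x y).+1 f x by rewrite /= iter_y.
by rewrite hS fy /h findex_iter // order_connected.
Qed.

End ConnectedOrbit.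

Lemma odd_perm_transitive (T : finType) (s : {perm T}) x :
  (forall y, y \in porbit s x) -> odd_perm s = ~~ odd #|T|.
Proof.
move=> s_trans; rewrite /odd_perm; have -> : porbits s = [set porbit s x].
  apply/setP => X; rewrite inE; apply/imsetP/eqP => [[y _ ->]|->]; last by exists x.
  by apply/eqP; rewrite eq_porbit_mem s_trans.
by rewrite cards1 addbT.
Qed.

Lemma signr_odd_perm_prod (R : pzRingType) (T : finType) (I : Type) (c : seq I)
    (s : I -> {perm T}) :
  (-1) ^+ odd_perm (\prod_(i <- c) s i)%g = \prod_(i <- c) ((-1) ^+ odd_perm (s i) : R).
Proof.
apply: (big_morph (fun q : {perm T} => (-1) ^+ odd_perm q : R)) => [q q'|].
  by rewrite odd_permM signr_addb.
by rewrite odd_perm1.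
Qed.

Section LoopOfLifts.
Variables (n r : nat) (p : 'I_n -> {perm 'I_r}).

Lemma step_inj : injective (step p).
Proof. by move=> [i a] [j b] /pair_equal_spec /= [/ordS_inj <- /perm_inj ->]. Qed.

Lemma val_iter_ordS k (i : 'I_n) : val (iter k (@ordS n) i) = ((i + k) %% n)%N.
Proof.
elim: k => [|k IHk] /=; first by rewrite addn0 modn_small.
by rewrite IHk -addn1 modnDml -addnA addn1.
Qed.

Lemma fconnect_ordS (i j : 'I_n) : fconnect (@ordS n) i j.
Proof.
have -> : j = iter (j + (n - i)) (@ordS n) i.
  apply/val_inj; rewrite val_iter_ordS addnCA subnKC ?modnDr ?modn_small //.
  exact: ltnW.
exact: fconnect_iter.
Qed.

Lemma order_ordS (i : 'I_n) : fingraph.order (@ordS n) i = n.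
Proof. by rewrite (order_connected (fconnect_ordS i)) card_ord. Qed.

Lemma iter_ordS_order (i : 'I_n) : iter n (@ordS n) i = i.
Proof. by have := iter_order (@ordS_inj n) i; rewrite order_ordS. Qed.

Definition loop_perm (i : 'I_n) : {perm 'I_r} :=
  (\prod_(j <- fingraph.orbit (@ordS n) i) p j)%g.

Lemma iter_step k i a :
  iter k (step p) (i, a) =
  (iter k (@ordS n) i, (\prod_(j <- traject (@ordS n) i k) p j)%g a).
Proof.
elim: k => [|k IHk]; first by rewrite /= big_nil perm1.
by rewrite iterS IHk trajectSr big_rcons /= permM.
Qed.

Lemma iter_step_loop k i a :
  iter (k * n) (step p) (i, a) = (i, (loop_perm i ^+ k)%g a).
Proof.
elim: k => [|k IHk]; first by rewrite mul0n /= expg0 perm1.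
rewrite mulSn iterD IHk iter_step iter_ordS_order expgSr permM.
by rewrite /loop_perm /fingraph.orbit order_ordS.
Qed.

Hypothesis p_conn : punctured_connected p.

Lemma fconnect_step s s' : fconnect (step p) s s'.
Proof. by have [k <-] := p_conn s s'; exact: fconnect_iter. Qed.

Lemma loop_perm_transitive i a b : b \in porbit (loop_perm i) a.
Proof.
have /iter_findex := fconnect_step (i, a) (i, b).
set k := findex _ _ _ => iter_k.
have n_dvd_k : (n %| k)%N.
  move: (congr1 (val \o fst) iter_k); rewrite /= iter_step /= val_iter_ordS.
  rewrite -[RHS](@modn_small i n) // -[X in _ = (X %% n)%N]addn0 => /eqP.
  by rewrite eqn_modDl mod0n.
rewrite -(divnK n_dvd_k) iter_step_loop in iter_k.
by apply/porbitP; exists (k %/ n)%N; case: iter_k => <-.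
Qed.

Lemma signr_prod_gluing (R : comPzRingType) (i : 'I_n) (a : 'I_r) :
  \prod_j ((-1) ^+ p j : R) = (-1) ^+ r.+1.
Proof.
rewrite -(big_orbit_connected (fconnect_ordS i)) -signr_odd_perm_prod.
rewrite (odd_perm_transitive (loop_perm_transitive i a)) card_ord.
by rewrite -[RHS]signr_odd.
Qed.

Lemma monodromyE (R : realType) (h : 'I_n -> 'I_r -> R[i]) s :
  monodromy p h s = \prod_i \prod_a h i a.
Proof.
by rewrite pair_bigA -(big_iter_connected (fconnect_step s)) card_prod !card_ord.
Qed.

End LoopOfLifts.

Lemma dotZ_subZ (x y w : Z2) : dotZ (subZ x y) w = dotZ x w - dotZ y w.
Proof. by rewrite /dotZ /= !mulrBl opprD addrACA. Qed.

Section Gluing.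
Variables (R : realType) (n r : nat) (v : 'I_n -> Z2) (p : 'I_n -> {perm 'I_r})
  (m : 'I_n -> 'I_r -> Z2).

Lemma det_Gsf_ccw (g : 'I_n -> 'I_r -> R[i]) i :
  \det (Gsf p m g (i, true) (1, 1)) = (-1) ^+ p i * \prod_a g i a.
Proof.
have -> : Gsf p m g (i, true) (1, 1) = diag_mx (\row_a g i a) *m perm_mx (p i).
  apply/matrixP => a b; rewrite mul_diag_mx !mxE /zmon /= !exp1rz mulr1 eq_sym.
  by case: eqP; rewrite ?mulr1 ?mulr0.
rewrite det_mulmx det_diag det_perm mulrC; congr (_ * _).
by apply: eq_bigr => a _; rewrite mxE.
Qed.

Hypotheses (phi_cont : phi_continuous v p m) (sep : separable v m).

Definition slope_along_tau (mv : move n) (a : 'I_r) : int :=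
  dotZ (m (msrc mv) a) (v (mtau mv)).

Lemma slope_along_tau_inj mv : injective (slope_along_tau mv).
Proof.
case: mv => i [] a b; first exact: sep.
move=> eq_ab; apply: (@perm_inj _ (p i)^-1); apply: (@sep i) => /=.
by rewrite !phi_cont !permKV.
Qed.

Lemma Nmat_slope_lt nc mv f (t : R[i] * R[i]) a b :
  Nmat v p m nc mv f t a b != 0 -> slope_along_tau mv b < slope_along_tau mv a.
Proof.
rewrite mxE; case: ifP => [/and4P[neq_ab _ _ key_ge] _ | _]; last by rewrite eqxx.
rewrite lt_neqAle -subr_ge0 /slope_along_tau -dotZ_subZ key_ge andbT.
by apply: contra neq_ab => /eqP/slope_along_tau_inj ->.
Qed.

Lemma det_Theta nc mv (t : R[i] * R[i]) : \det (Theta v p m nc mv t) = 1.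
Proof.
rewrite /Theta (big_morph _ (@det_mulmx _ r) (@det1 _ r)) big1 // => f _.
apply: (@det_expm_descending _ _ (key_rank (slope_along_tau mv)))
  => [a | a b /Nmat_slope_lt].
  by rewrite -[X in (_ < X)%N]card_ord key_rank_lt_card.
exact: key_rank_lt.
Qed.

Lemma det_Gmat_ccw (g : 'I_n -> 'I_r -> R[i]) nc i :
  \det (Gmat v p m g nc (i, true) (1, 1)) = (-1) ^+ p i * \prod_a g i a.
Proof. by rewrite det_mulmx det_Theta mul1r det_Gsf_ccw. Qed.

Lemma prod_gluing_consistent (g : 'I_n -> 'I_r -> R[i]) nc (i0 : 'I_n) :
  consistent v p m g nc -> \prod_i ((-1) ^+ p i * \prod_a g i a) = 1.
Proof.
move=> cons; pose c := [seq (j, true) | j <- fingraph.orbit (@ordS n) i0].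
have c_cycle : path.cycle (@chains n) c.
  by rewrite cycle_map; exact: (cycle_orbit (@ordS_inj n)).
have := cons None c c_cycle (introT allP (fun _ _ => isT)) (1, 1)
  (oner_neq0 _) (oner_neq0 _).
move/(congr1 determinant); rewrite det1 (big_morph _ (@det_mulmx _ r) (@det1 _ r)).
rewrite big_map (big_orbit_connected (fconnect_ordS i0)) => prod_det.
by rewrite -[RHS]prod_det; apply: eq_bigr => i _; rewrite det_Gmat_ccw.
Qed.

Lemma monodromy_consistent (g : 'I_n -> 'I_r -> R[i]) nc s :
  punctured_connected p -> consistent v p m g nc -> monodromy p g s = (-1) ^+ r.+1.
Proof.
move=> p_conn /(prod_gluing_consistent s.1).
rewrite big_split /= (signr_prod_gluing p_conn _ s.1 s.2) => prod_g.
by rewrite (monodromyE p_conn) -[LHS](signrMK r.+1) prod_g mulr1.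
Qed.

End Gluing.

Lemma iso_ls_of_monodromy (R : realType) n r (p : 'I_n -> {perm 'I_r})
    (g g' : 'I_n -> 'I_r -> R[i]) s :
  punctured_connected p -> local_system g -> local_system g' ->
  monodromy p g s = monodromy p g' s -> iso_ls p g g'.
Proof.
move=> p_conn g_nz g'_nz eq_mono.
have prod_u : \prod_y (g' y.1 y.2 / g y.1 y.2) = 1.
  rewrite prodf_div -!pair_bigA -!(monodromyE p_conn _ s) eq_mono divff //.
  by rewrite (monodromyE p_conn); apply/prodf_neq0 => i _; apply/prodf_neq0.
have [h h_nz h_step] := coboundary_of_prod_eq1 (fconnect_step p_conn s)
  (@step_inj _ _ p) (fun y => mulf_neq0 (g'_nz _ _) (invr_neq0 (g_nz _ _))) prod_u.
exists (fun i a => h (i, a)); split => [i a | i a]; first exact: h_nz.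
have -> : h (ordS i, p i a) = h (i, a) * (g' i a / g i a) := h_step (i, a).
by rewrite -(mulrA (h _)) divfK // mulrC mulKf.
Qed.

Theorem lemma5p3 (R : realType) (n r : nat) (v : 'I_n -> Z2)
  (p : 'I_n -> {perm 'I_r}) (m : 'I_n -> 'I_r -> Z2)
  (g : 'I_n -> 'I_r -> R[i])
  (nc : move n -> Lface n r -> 'I_r -> 'I_r -> R[i]) :
  complete_fan v ->
  (0 < r)%N ->
  phi_continuous v p m ->
  separable v m ->
  punctured_connected p ->
  local_system g ->
  consistent v p m g nc ->
  (forall s, monodromy p g s = (-1) ^+ r.+1) /\
  (forall g' : 'I_n -> 'I_r -> R[i], local_system g' ->
     (exists s, monodromy p g' s = (-1) ^+ r.+1) -> iso_ls p g g').
Proof.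
move=> _ _ phi_cont sep p_conn g_ls cons.
have mono_g s := monodromy_consistent phi_cont sep s p_conn cons.
split=> // g' g'_ls [s mono_g'].
by apply: (iso_ls_of_monodromy (s := s)); rewrite // mono_g mono_g'.
Qed.
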